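(* Let $G=(V,E,T,c)$ and $H=(V_H,E_H,T,c_H)$ be $k$-terminal networks with the same terminal set $T$, and let $q\ge1$. Suppose $\mathcal{T}_e(G)=\mathcal{T}_e(H)$ and $$\mathrm{mincut}_G(S)\le \mathrm{mincut}_H(S)\le q\cdot \mathrm{mincut}_G(S)\qquad\text{for all } S\in\mathcal{T}_e(G).$$ Then $\mathrm{mincut}_G(S)\le \mathrm{mincut}_H(S)\le q\cdot\mathrm{mincut}_G(S)$ for every $S\subset T$ with $S\ne\emptyset,T$; that is, $H$ is a cut sparsifier of $G$ of quality $q$.
   Context: A $k$-terminal network $G=(V,E,T,c)$ is a finite connected undirected graph $(V,E)$ with edge weights (capacities) $c:E\to\mathbb{R}_{>0}$ and a set $T\subseteq V$ of $|T|=k$ terminals. For $F\subseteq E$ let $c(F)=\sum_{e\in F}c(e)$; for $W\subseteq V$ let $\delta(W)$ be the set of edges with exactly one endpoint in $W$. For $S\subset T$ with $S\neq\emptyset,T$, write $\bar S=T\setminus S$; a cut $(W,V\setminus W)$ is $S$-separating if $W\cap T\in\{S,\bar S\}$, and $\mathrm{mincut}_G(S)$ is the minimum of $c(\delta(W))$ over all $S$-separating cuts. It is assumed (e.g. by a generic perturbation of the weights) that the minimizing cutset is unique; it is denoted $E_S$ (so $E_S=E_{\bar S}$). For $F\subseteq E$, $CC(F)$ denotes the set of vertex sets of connected components of $(V,E\setminus F)$. The cutset $E_S$ is called elementary if $|CC(E_S)|=2$, and $\mathcal{T}_e(G)=\{S\subset T:\ S\neq\emptyset,T,\ |CC(E_S)|=2\}$.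 The same notions are used for $H$. *)

From HB Require Import structures.
From mathcomp Require Import all_boot all_order all_algebra.
Set Implicit Arguments. Unset Strict Implicit. Unset Printing Implicit Defensive.
Import Order.TTheory GRing.Theory Num.Theory.
Local Open Scope ring_scope.

(* A k-terminal network on vertex type V (finite), terminals indexed by the
   finite type K (|K| = k) via the injection t : K -> V.  The graph is encoded
   by a capacity function c : V -> V -> R: {u,v} is an edge iff 0 < c u v,
   in which case c u v is its capacity. *)

Section Network.
Variables (R : realFieldType) (K V : finType) (c : V -> V -> R) (t : K -> V).

Definition edge_rel : rel V := fun u v => 0 < c u v.

Definition is_network : Prop :=
  [/\ forall u v, c u v = c v u,
      forall u v, 0 <= c u v,
      forall u v, connect edge_rel u v
    & injective t].

(* delta(W): edges (as ordered pairs, both orientations) with exactly one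
   endpoint in W *)
Definition delta (W : {set V}) : {set V * V} :=
  [set p | (0 < c p.1 p.2) && ((p.1 \in W) != (p.2 \in W))].

(* c(delta(W)) : each undirected edge counted once *)
Definition cutval (W : {set V}) : R :=
  \sum_(u in W) \sum_(v in ~: W) c u v.

Definition termset (W : {set V}) : {set K} := [set k | t k \in W].

Definition separating (S : {set K}) (W : {set V}) : bool :=
  (termset W == S) || (termset W == ~: S).

(* mincut(S): minimum of cutval over S-separating cuts (the candidate
   t @: S is S-separating since t is injective) *)
Definition mincut (S : {set K}) : R :=
  cutval (Order.arg_min (t @: S) (separating S) cutval).

Definition rem_rel (F : {set V * V}) : rel V :=
  fun u v => edge_rel u v && ((u, v) \notin F) && ((v, u) \notin F).

Definition CC (F : {set V * V}) : {set {set V}} :=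
  [set [set y | connect (rem_rel F) x y] | x : V].

Definition unique_mincuts : Prop :=
  forall S : {set K}, S != set0 -> S != setT ->
  forall W W' : {set V}, separating S W -> separating S W' ->
  cutval W = mincut S -> cutval W' = mincut S -> delta W = delta W'.

(* S in T_e: the (unique) minimum cutset E_S is elementary *)
Definition elementary (S : {set K}) : bool :=
  [&& S != set0, S != setT &
   [exists W : {set V}, [&& separating S W, cutval W == mincut S &
                           #|CC (delta W)| == 2%N]]].

End Network.

(* Induct on the size of the minimum cutset E_S = delta W. If E_S is not elementary,
   (V, E \ E_S) has a component X avoiding two fixed terminals on opposite sides
   of W. Every component contains a terminal (minimality), so X and the symmetric
   difference W + X are terminal cuts whose cutsets partition E_S. Hence
   mincut S >= mincut S1 + mincut S2 for S2 := T(W + X), S1 := S + S2, and the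
   reverse inequality holds in every network because mincut is subadditive along
   symmetric differences. So delta X and delta (W + X) are the minimum cutsets
   of S1 and S2, both smaller than E_S. Thus the lower bound propagates from the
   elementary cuts of H, and the upper bound from those of G. *)

From mathcomp Require Import all_boot all_order all_algebra.
From mathcomp Require Import lra zify.
Import Order.TTheory GRing.Theory Num.Theory.
Local Open Scope ring_scope.
Set Implicit Arguments. Unset Strict Implicit. Unset Printing Implicit Defensive.

Section SymmetricDifference.
Variable T : finType.
Implicit Types A B : {set T}.

Definition sdiff A B : {set T} := (A :\: B) :|: (B :\: A).

Lemma in_sdiff A B x : (x \in sdiff A B) = ((x \in A) != (x \in B)).
Proof. by rewrite !inE; case: (x \in A); case: (x \in B). Qed.

Lemma sdiffCl A B : sdiff (~: A) B = ~: sdiff A B.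
Proof. by apply/setP => x; rewrite !(in_sdiff, inE); case: (x \in A); case: (x \in B). Qed.

Lemma sdiffCr A B : sdiff A (~: B) = ~: sdiff A B.
Proof. by apply/setP => x; rewrite !(in_sdiff, inE); case: (x \in A); case: (x \in B). Qed.

Lemma sdiffKr A B : sdiff A (sdiff A B) = B.
Proof. by apply/setP => x; rewrite !in_sdiff; case: (x \in A); case: (x \in B). Qed.

Lemma sdiffKl A B : sdiff (sdiff A B) B = A.
Proof. by apply/setP => x; rewrite !in_sdiff; case: (x \in A); case: (x \in B). Qed.

Lemma sdiff_sub A B : B \subset A -> sdiff A B = A :\: B.
Proof.
move=> sBA; apply/setP => x; rewrite in_sdiff !inE.
by case xB: (x \in B); rewrite ?(subsetP sBA x xB) // eq_sym; case: (x \in A).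
Qed.

Lemma sum_sdiff_le (R : numDomainType) (F : T -> R) A B :
  (forall x, 0 <= F x) ->
  \sum_(x in sdiff A B) F x <= \sum_(x in A) F x + \sum_(x in B) F x.
Proof.
move=> F_ge0; rewrite big_mkcond [\sum_(x in A) _]big_mkcond [\sum_(x in B) _]big_mkcond.
rewrite -big_split ler_sum // => x _ /=.
by rewrite in_sdiff; have := F_ge0 x; case: (x \in A); case: (x \in B) => /= Fx_ge0;
  rewrite ?addr0 ?add0r ?lerDl ?lerDr ?addr_ge0.
Qed.

Lemma card_neq2_third A a b : a \in A -> b \in A -> a != b -> #|A| != 2%N ->
  exists2 x, x \in A & (x != a) && (x != b).
Proof.
move=> aA bA ab A_neq2; apply/exists_inP; apply: contraNT A_neq2 => /exists_inPn third.
suff -> : A = [set a; b] by rewrite cards2 ab.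
apply/setP => x; rewrite !inE; apply/idP/idP => [xA | /orP [] /eqP -> //].
by move: (third x xA); rewrite negb_and !negbK orbC.
Qed.

End SymmetricDifference.

Section Cuts.
Variables (R : realFieldType) (V : finType) (c : V -> V -> R).
Hypothesis c_sym : forall u v, c u v = c v u.
Hypothesis c_ge0 : forall u v, 0 <= c u v.
Implicit Types A B C W : {set V}.

Lemma delta_sdiff A B : delta c (sdiff A B) = sdiff (delta c A) (delta c B).
Proof.
apply/setP => -[u v]; rewrite !(inE, in_sdiff) /=.
by case: (0 < c u v); case: (u \in A); case: (v \in A); case: (u \in B); case: (v \in B).
Qed.

Lemma cutval_delta A : cutval c A *+ 2 = \sum_(p in delta c A) c p.1 p.2.
Proof.
have -> : \sum_(p in delta c A) c p.1 p.2 =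
          \sum_u \sum_v (if (u \in A) != (v \in A) then c u v else 0).
  rewrite pair_bigA big_mkcond; apply: eq_bigr => -[u v] _; rewrite inE /=.
  by have := c_ge0 u v; rewrite le_eqVlt => /predU1P [<-|->]; rewrite ?if_same.
rewrite (bigID (mem A)) /= mulr2n; congr (_ + _).
  apply: eq_bigr => u uA; rewrite big_mkcond; apply: eq_bigr => v _.
  by rewrite uA inE; case: (v \in A).
rewrite /cutval exchange_big; apply: eq_big => [u|u]; first by rewrite inE.
rewrite inE => uA; rewrite big_mkcond; apply: eq_bigr => v _.
by rewrite c_sym (negbTE uA); case: (v \in A).
Qed.

Lemma cutval_sdiff_le A B : cutval c (sdiff A B) <= cutval c A + cutval c B.
Proof.
rewrite -(ler_pMn2r (isT : (0 < 2)%N)) mulrnDl !cutval_delta delta_sdiff.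
exact: sum_sdiff_le (fun p => c_ge0 p.1 p.2).
Qed.

Lemma cutval_sdiff_sub W C : delta c C \subset delta c W ->
  cutval c W = cutval c C + cutval c (sdiff W C).
Proof.
move=> sCW; apply/eqP; rewrite -(eqr_pMn2r (isT : (0 < 2)%N)) mulrnDl !cutval_delta.
by rewrite delta_sdiff sdiff_sub // (big_setID (delta c C)) (setIidPr sCW).
Qed.

Lemma card_delta_sdiff_sub W C : delta c C \subset delta c W ->
  #|delta c W| = (#|delta c C| + #|delta c (sdiff W C)|)%N.
Proof.
by move=> sCW; rewrite delta_sdiff sdiff_sub // -(cardsID (delta c C)) (setIidPr sCW).
Qed.

Definition component W x : {set V} := [set y | connect (rem_rel c (delta c W)) x y].

Lemma CC_delta W : CC c (delta c W) = [set component W x | x : V].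
Proof. by []. Qed.

Lemma rem_rel_sym (F : {set V * V}) : symmetric (rem_rel c F).
Proof.
move=> u v; rewrite /rem_rel /edge_rel c_sym.
by case: (0 < c v u); case: ((u, v) \in F); case: ((v, u) \in F).
Qed.

Lemma component_id W x : x \in component W x.
Proof. by rewrite inE connect0. Qed.

Lemma component_eq W x y : y \in component W x -> component W y = component W x.
Proof.
rewrite inE => cxy; apply/setP => z; rewrite !inE.
by rewrite (same_connect (sym_connect_sym (rem_rel_sym _)) cxy).
Qed.

Lemma mem_component_side W x y : y \in component W x -> (y \in W) = (x \in W).
Proof.
rewrite inE => cxy; apply/esym/(closed_connect _ cxy) => u v.
by rewrite /rem_rel /edge_rel !inE /= => /andP [/andP [-> /negbNE /eqP]].
Qed.

Lemma delta_component_sub W x : delta c (component W x) \subset delta c W.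
Proof.
apply/subsetP => -[u v]; rewrite !inE /= => /andP [cuv]; rewrite cuv /=.
apply: contraNN => /eqP uvW; apply/eqP.
have e : rem_rel c (delta c W) u v by rewrite /rem_rel /edge_rel !inE /= cuv uvW eqxx !andbF.
have sym := sym_connect_sym (rem_rel_sym (delta c W)).
exact: (same_connect_r sym (connect1 e) x).
Qed.

Hypothesis c_conn : forall u v, connect (edge_rel c) u v.

Lemma delta_neq0 A u v : u \in A -> v \notin A -> delta c A != set0.
Proof.
move=> uA vA; apply/negP => /eqP delta0; move/negP: vA; apply.
suff clA : closed (edge_rel c) A by rewrite -(closed_connect clA (c_conn u v)).
move=> x y cxy; have : (x, y) \notin delta c A by rewrite delta0 inE.
by rewrite inE /= -/(edge_rel c x y) cxy /= negbK => /eqP.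
Qed.

Lemma cutval_gt0 A u v : u \in A -> v \notin A -> 0 < cutval c A.
Proof.
move=> uA vA; have /set0Pn [p p_in] := delta_neq0 uA vA.
rewrite -(ltr_pMn2r (isT : (0 < 2)%N)) mul0rn cutval_delta // (bigD1 p) //=.
apply: ltr_pwDl; first by move: p_in; rewrite inE => /andP [].
by apply: sumr_ge0 => ? _.
Qed.

End Cuts.

Section Terminals.
Variables (K V : finType) (t : K -> V).
Implicit Types (S : {set K}) (A B W : {set V}).

Lemma termset_sdiff A B : termset t (sdiff A B) = sdiff (termset t A) (termset t B).
Proof. by apply/setP => k; rewrite !(in_sdiff, inE). Qed.

Lemma separating_termset W : separating t (termset t W) W.
Proof. by rewrite /separating eqxx. Qed.

Lemma separating_sdiff S1 S2 A B :
  separating t S1 A -> separating t S2 B -> separating t (sdiff S1 S2) (sdiff A B).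
Proof.
rewrite /separating termset_sdiff => /orP [] /eqP -> /orP [] /eqP ->;
  by rewrite ?sdiffCl ?sdiffCr ?setCK eqxx ?orbT.
Qed.

Lemma separating_terminals S W : S != set0 -> S != setT -> separating t S W ->
  exists k1 k2, t k1 \in W /\ t k2 \notin W.
Proof.
move=> /set0Pn [k1 k1S]; rewrite -subTset => /subsetPn [k2 _ k2S].
have in_termset k : (k \in termset t W) = (t k \in W) by rewrite inE.
by case/orP => /eqP eS; [exists k1, k2 | exists k2, k1]; rewrite -!in_termset eS ?inE k1S.
Qed.

Lemma termset_proper A k1 k2 : t k1 \in A -> t k2 \notin A ->
  termset t A != set0 /\ termset t A != setT.
Proof.
move=> k1A k2A; split; apply/eqP => /setP.
  by move/(_ k1); rewrite !inE k1A.
by move/(_ k2); rewrite !inE (negbTE k2A).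
Qed.

Lemma separating_proper S W : separating t S W ->
  termset t W != set0 -> termset t W != setT -> S != set0 /\ S != setT.
Proof.
case/orP => /eqP -> W0 WT; first by split.
split; [apply: contraNN WT | apply: contraNN W0] => /eqP ->; by rewrite ?setC0 ?setCT.
Qed.

Hypothesis t_inj : injective t.

Section Mincut.
Variables (R : realFieldType) (c : V -> V -> R).

Definition mincut_side S : {set V} := Order.arg_min (t @: S) (separating t S) (cutval c).

Lemma mincutE S : mincut c t S = cutval c (mincut_side S).
Proof. by []. Qed.

Lemma separating_imset S : separating t S (t @: S).
Proof.
by rewrite /separating; apply/orP; left; apply/eqP/setP => k; rewrite inE (mem_imset _ _ t_inj).
Qed.

Lemma separating_mincut_side S : separating t S (mincut_side S).
Proof. by rewrite /mincut_side; case: (arg_minP (cutval c) (separating_imset S)). Qed.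

Lemma mincut_le S W : separating t S W -> mincut c t S <= cutval c W.
Proof.
rewrite mincutE /mincut_side.
by case: (arg_minP (cutval c) (separating_imset S)) => ? _; apply.
Qed.

Hypothesis c_sym : forall u v, c u v = c v u.
Hypothesis c_ge0 : forall u v, 0 <= c u v.

Lemma mincut_sdiff_le S1 S2 : mincut c t (sdiff S1 S2) <= mincut c t S1 + mincut c t S2.
Proof.
rewrite !mincutE; apply: le_trans (cutval_sdiff_le c_sym c_ge0 _ _).
by apply/mincut_le/separating_sdiff; apply: separating_mincut_side.
Qed.

End Mincut.
End Terminals.

Section Decomposition.
Variables (R : realFieldType) (K V : finType) (c : V -> V -> R) (t : K -> V).
Hypothesis c_sym : forall u v, c u v = c v u.
Hypothesis c_ge0 : forall u v, 0 <= c u v.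
Hypothesis c_conn : forall u v, connect (edge_rel c) u v.
Hypothesis t_inj : injective t.

(* A terminal-free component of (V, E \ delta W) could be moved to the other side
   of W, which keeps W separating and strictly decreases its cut value. *)
Lemma mincut_component_has_terminal S W x : S != set0 -> S != setT ->
  separating t S W -> cutval c W = mincut c t S -> exists k, t k \in component c W x.
Proof.
move=> S0 ST sepW minW; have [k1 [_ [_ _]]] := separating_terminals S0 ST sepW.
case: (pickP (fun k => t k \in component c W x)) => [k | no_terminal]; first by exists k.
have sepW' : separating t S (sdiff W (component c W x)).
  rewrite /separating; suff -> : termset t (sdiff W (component c W x)) = termset t W by [].
  apply/setP => k; rewrite [LHS]inE in_sdiff no_terminal inE.
  by case: (t k \in W).
have comp_gt0 := cutval_gt0 c_sym c_ge0 c_conn (component_id c W x) (negbT (no_terminal k1)).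
have := mincut_le t_inj c sepW'.
rewrite -minW (cutval_sdiff_sub c_sym c_ge0 (delta_component_sub c_sym W x)); lra.
Qed.

Lemma nonelementary_mincut_split S W : S != set0 -> S != setT ->
  separating t S W -> cutval c W = mincut c t S -> #|CC c (delta c W)| != 2%N ->
  exists X, [/\ delta c X \subset delta c W,
                termset t X != set0, termset t X != setT,
                termset t (sdiff W X) != set0 & termset t (sdiff W X) != setT].
Proof.
move=> S0 ST sepW minW notCC2.
have [k1 [k2 [k1W k2W]]] := separating_terminals S0 ST sepW.
have component12 : component c W (t k1) != component c W (t k2).
  apply: contraNneq k2W => eq12.
  by have := component_id c W (t k2); rewrite -eq12 => /mem_component_side ->.
rewrite CC_delta in notCC2.
have in_CC y : component c W y \in [set component c W x | x in V] by apply: imset_f.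
have [X] := card_neq2_third (in_CC _) (in_CC _) component12 notCC2.
case/imsetP => z _ -> /andP [z1 z2].
have [k kz] := mincut_component_has_terminal z S0 ST sepW minW.
have k1z : t k1 \notin component c W z.
  by apply: contra z1 => /component_eq ->.
have k2z : t k2 \notin component c W z.
  by apply: contra z2 => /component_eq ->.
have [X0 XT] := termset_proper kz k1z.
have k1Y : t k1 \in sdiff W (component c W z) by rewrite in_sdiff k1W (negbTE k1z).
have k2Y : t k2 \notin sdiff W (component c W z).
  by rewrite in_sdiff (negbTE k2W) (negbTE k2z).
have [Y0 YT] := termset_proper k1Y k2Y.
by exists (component c W z); split; rewrite ?delta_component_sub.
Qed.

Lemma delta_neq0_termset A : termset t A != set0 -> termset t A != setT -> delta c A != set0.
Proof.
move=> A0 AT; have [k1 [k2 [k1A k2A]]] := separating_terminals A0 AT (separating_termset t A).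
exact: (delta_neq0 c_conn k1A k2A).
Qed.

Hypothesis mincuts_unique : unique_mincuts c t.

Lemma mincut_ind (P : {set K} -> Prop) :
  (forall S, elementary c t S -> P S) ->
  (forall S1 S2, P S1 -> P S2 ->
     mincut c t (sdiff S1 S2) = mincut c t S1 + mincut c t S2 -> P (sdiff S1 S2)) ->
  forall S, S != set0 -> S != setT -> P S.
Proof.
move=> P_elem P_sdiff.
suff P_small n S : (#|delta c (mincut_side t c S)| < n)%N -> S != set0 -> S != setT -> P S.
  by move=> S; apply: P_small.
elim: n S => [//|n IH] S small S0 ST.
have [elS | nelS] := boolP (elementary c t S); first exact: P_elem.
set W := mincut_side t c S in small.
have sepW : separating t S W := separating_mincut_side t_inj c S.
have minW : cutval c W = mincut c t S by [].
have notCC2 : #|CC c (delta c W)| != 2%N.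
  apply: contraNN nelS => CC2; rewrite /elementary S0 ST.
  by apply/existsP; exists W; rewrite sepW CC2 minW eqxx.
have [X [sXW X0 XT Y0 YT]] := nonelementary_mincut_split S0 ST sepW minW notCC2.
have card_pieces : (#|delta c X| < n /\ #|delta c (sdiff W X)| < n)%N.
  have := card_delta_sdiff_sub sXW.
  have := delta_neq0_termset X0 XT; have := delta_neq0_termset Y0 YT.
  rewrite -!card_gt0; lia.
have cut_split := cutval_sdiff_sub c_sym c_ge0 sXW.
pose S2 := termset t (sdiff W X); pose S1 := sdiff S S2.
have sep1 : separating t S1 X.
  by rewrite -(sdiffKr W X); apply: separating_sdiff sepW (separating_termset _ _).
have sep2 : separating t S2 (sdiff W X) := separating_termset t _.
have le1 := mincut_le t_inj c sep1.
have le2 := mincut_le t_inj c sep2.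
have := mincut_sdiff_le t_inj c_sym c_ge0 S1 S2; rewrite sdiffKl => le12.
have min1 : cutval c X = mincut c t S1 by lra.
have min2 : cutval c (sdiff W X) = mincut c t S2 by lra.
have mincut_split : mincut c t S = mincut c t S1 + mincut c t S2 by lra.
rewrite -(sdiffKl S S2) -/S1; apply: P_sdiff; last by rewrite sdiffKl.
- have [S10 S1T] := separating_proper sep1 X0 XT.
  apply: (IH _ _ S10 S1T).
  have /= -> := mincuts_unique S10 S1T (separating_mincut_side t_inj c S1) sep1 erefl min1.
  by case: card_pieces.
- have [S20 S2T] := separating_proper sep2 Y0 YT.
  apply: (IH _ _ S20 S2T).
  have /= -> := mincuts_unique S20 S2T (separating_mincut_side t_inj c S2) sep2 erefl min2.
  by case: card_pieces.
Qed.

End Decomposition.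

Theorem theorem2p6 (R : realFieldType) (K V VH : finType)
  (c : V -> V -> R) (tG : K -> V) (cH : VH -> VH -> R) (tH : K -> VH) (q : R) :
  is_network c tG -> is_network cH tH ->
  unique_mincuts c tG -> unique_mincuts cH tH ->
  1 <= q ->
  (forall S : {set K}, elementary c tG S = elementary cH tH S) ->
  (forall S : {set K}, elementary c tG S ->
     mincut c tG S <= mincut cH tH S <= q * mincut c tG S) ->
  forall S : {set K}, S != set0 -> S != setT ->
     mincut c tG S <= mincut cH tH S <= q * mincut c tG S.
Proof.
move=> [cG_sym cG_ge0 cG_conn tG_inj] [cH_sym cH_ge0 cH_conn tH_inj] uniqG uniqH _.
move=> same_elem elem_bounds.
have upper : forall S, S != set0 -> S != setT -> mincut cH tH S <= q * mincut c tG S.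
  apply: (mincut_ind cG_sym cG_ge0 cG_conn tG_inj uniqG) => [{}S | S1 S2 le1 le2 ->].
    by move/elem_bounds/andP => [].
  rewrite mulrDr; apply: le_trans (mincut_sdiff_le tH_inj cH_sym cH_ge0 S1 S2) _.
  exact: lerD.
have lower : forall S, S != set0 -> S != setT -> mincut c tG S <= mincut cH tH S.
  apply: (mincut_ind cH_sym cH_ge0 cH_conn tH_inj uniqH) => [{}S | S1 S2 le1 le2 ->].
    by rewrite -same_elem => /elem_bounds/andP [].
  apply: le_trans (mincut_sdiff_le tG_inj cG_sym cG_ge0 S1 S2) _.
  exact: lerD.
by move=> S S0 ST; rewrite lower ?upper.
Qed.
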